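(* Let $R$ be a commutative ring with unit, let $\mathcal{P}$ be a poset satisfying the descending chain condition, and let $F\colon \mathcal{P}\to R\text{-mod}$ be a functor. Then the natural map $\operatorname{colim}_{\mathcal{P}_{<i}}F\to F(i)$ is a monomorphism for every $i\in\mathcal{P}$ if and only if $F$ is pseudo-projective.
   Context: A poset satisfies the descending chain condition (DCC) if it has no infinite strictly descending chain. For $i\in\mathcal{P}$, $\mathcal{P}_{<i}=\{j\in\mathcal{P}: j<i\}$ and $\mathcal{P}_{\le i}=\{j: j\le i\}$. For $j\le i$, $F(j<i)$ denotes the image under $F$ of the unique arrow $j\to i$, with $F(i<i)=1_{F(i)}$. For $j\in\mathcal{P}$, $\operatorname{Im}_F(j)=\sum_{k<j}\operatorname{Im}F(k<j)\subseteq F(j)$. For a subset $J$, $\max J$ denotes the set of maximal elements of $J$. A functor $F\colon\mathcal{P}\to R\text{-mod}$ is pseudo-projective at $i\in\mathcal{P}$ if for every finite subset $J\subset\mathcal{P}_{\le i}$ and every $\oplus_{j\in J}x_j\in\bigoplus_{j\in J}F(j)$ with $\sum_{j\in J}F(j<i)(x_j)=0$, one has $x_j\in\operatorname{Im}_F(j)$ for every $j\in\max J$. $F$ is pseudo-projective if it is pseudo-projective at every $i\in\mathcal{P}$. *)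

From HB Require Import structures.
From mathcomp Require Import all_boot all_order all_algebra.
Set Implicit Arguments. Unset Strict Implicit. Unset Printing Implicit Defensive.
Import Order.POrderTheory GRing.Theory.
Local Open Scope ring_scope.

Definition DCC (d : Order.disp_t) (P : porderType d) : Prop :=
  ~ exists f : nat -> P, forall n, (f n.+1 < f n)%O.

(* A functor F : P -> R-mod.  [mor F j i] is F(j<i); only its values for
   (j <= i)%O are meaningful (values on other pairs are irrelevant junk). *)
Record PFunctor (R : comPzRingType) (d : Order.disp_t) (P : porderType d) := {
  obj :> P -> lmodType R;
  mor : forall j i : P, {linear obj j -> obj i};
  mor_id : forall (i : P) (x : obj i), mor i i x = x;
  mor_comp : forall (k j i : P), (k <= j)%O -> (j <= i)%O ->
      forall x : obj k, mor j i (mor k j x) = mor k i x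
}.

Section Defs.
Variables (R : comPzRingType) (d : Order.disp_t) (P : porderType d).
Variable F : PFunctor R P.

(* A formal element of a direct sum: a finite list of homogeneous pieces
   (j, x) with x : F j; the element represented is the sum of the pieces. *)
Definition piece := {j : P & obj F j}.

Definition inj_at (l : P) (p : piece) : obj F l :=
  match tag p =P l with
  | ReflectT e => eq_rect (tag p) (fun j => obj F j) (tagged p) l e
  | ReflectF _ => 0
  end.

Definition coef (l : P) (s : seq piece) : obj F l :=
  \sum_(p <- s) inj_at l p.

Definition to_vertex (i : P) (s : seq piece) : obj F i :=
  \sum_(p <- s) mor F (tag p) i (tagged p).

(* relation generators of the colimit:  iota_k y - iota_j F(k<j) y  *)
Definition rel_pieces (r : {kj : P * P & obj F kj.1}) : seq piece :=
  [:: existT (fun j => obj F j) (tag r).1 (tagged r);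
      existT (fun j => obj F j) (tag r).2 (- mor F (tag r).1 (tag r).2 (tagged r))].

Definition rel_sum (rs : seq {kj : P * P & obj F kj.1}) : seq piece :=
  flatten (map rel_pieces rs).

(* The natural map colim_{P_{<i}} F --> F(i) is a monomorphism.
   colim_{P_{<i}} F is (its standard construction) the quotient of
   (+)_{j<i} F(j) by the submodule N spanned by iota_k y - iota_j F(k<j) y
   for k < j < i; the natural map is induced by the F(j<i).  It is a
   monomorphism (= injective) iff every element of (+)_{j<i} F(j) killed
   by sum_j F(j<i) lies in N. *)
Definition colim_map_mono (i : P) : Prop :=
  forall s : seq piece,
    all (fun p => (tag p < i)%O) s ->
    to_vertex i s = 0 ->
    exists rs : seq {kj : P * P & obj F kj.1},
      all (fun r => ((tag r).1 < (tag r).2)%O && ((tag r).2 < i)%O) rs /\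
      forall l : P, coef l s = coef l (rel_sum rs).

Definition in_ImF (j : P) (x : obj F j) : Prop :=
  exists s : seq piece,
    all (fun p => (tag p < j)%O) s /\ x = to_vertex j s.

Definition pseudo_projective_at (i : P) : Prop :=
  forall (J : seq P), uniq J -> all (fun j => (j <= i)%O) J ->
  forall x : forall j : P, obj F j,
    \sum_(j <- J) mor F j i (x j) = 0 ->
    forall j, j \in J -> (forall j', j' \in J -> ~~ (j < j')%O) ->
      in_ImF (x j).

Definition pseudo_projective : Prop := forall i : P, pseudo_projective_at i.

End Defs.

From HB Require Import structures.
From mathcomp Require Import all_boot all_order all_algebra.
From Stdlib Require Import Classical ClassicalEpsilon.
Set Implicit Arguments. Unset Strict Implicit. Unset Printing Implicit Defensive.
Import Order.POrderTheory GRing.Theory.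
Local Open Scope ring_scope.

(* Both implications are top-down inductions, well founded because DCC makes the
   multiset extension of the order well founded.
   If F is pseudo-projective, the component of a kernel element at a maximal index
   m lies in Im_F(m); subtracting the matching relations pushes it strictly below m.
   Conversely, let every colimit map be injective and write a kernel element as a
   sum of relations. If a maximal target m carries no coefficient, the sources of
   the relations into m form a kernel element at m, so these relations can be traded
   for relations with targets below m. Once every target lies below the support,
   the component at a maximal index j only receives terms -F(k<j) y, which lie in
   Im_F(j). *)

Section DCCInduction.
Variables (d : Order.disp_t) (P : porderType d).
Hypothesis dcc : DCC P.

Lemma dcc_ind (Q : P -> Prop) :
  (forall x, (forall y, (y < x)%O -> Q y) -> Q x) -> forall x, Q x.
Proof.
move=> IH x; apply: NNPP => nQx.
have down (z : {z | ~ Q z}) : {y : {y | ~ Q y} | (sval y < sval z)%O}.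
  case: z => z nQz; apply: constructive_indefinite_description.
  apply: NNPP => nodown; apply: (nQz); apply: IH => y yz; apply: NNPP => nQy.
  by apply: nodown; exists (exist _ y nQy).
apply: dcc; exists (fun n => sval (iter n (fun z => sval (down z)) (exist _ x nQx))).
by move=> n; rewrite iterS; exact: (svalP (down _)).
Qed.

(* Induction along the multiset extension of [<]: an element may be replaced by
   finitely many strictly smaller ones. *)
Lemma dcc_seq_ind (Q : seq P -> Prop) :
  Q [::] ->
  (forall m L, (forall K, all (fun k => (k < m)%O) K -> Q (K ++ L)) -> Q (m :: L)) ->
  forall L, Q L.
Proof.
move=> Q0 Qstep.
have Qcons m L : Q L -> Q (m :: L).
  elim/dcc_ind: m L => m IH L QL; apply: Qstep.
  by elim=> [//|k K IHK] /= /andP [km kK]; exact: IH km _ (IHK kK).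
by elim=> // m L IHL; apply: Qcons.
Qed.

End DCCInduction.

Section Domination.
Variables (d : Order.disp_t) (P : porderType d).
Implicit Types (K L T : seq P) (m t u : P).

Definition dominated L t := has (fun l => (t <= l)%O) L.

Lemma dominated_cons m L t : dominated (m :: L) t = (t <= m)%O || dominated L t.
Proof. by []. Qed.

Lemma dominated_cat K L t : dominated (K ++ L) t = dominated K t || dominated L t.
Proof. exact: has_cat. Qed.

Lemma dominated_mem L t : t \in L -> dominated L t.
Proof. by move=> tL; apply/hasP; exists t. Qed.

Lemma dominated_le L t u : (t <= u)%O -> dominated L u -> dominated L t.
Proof. by move=> tu /hasP [l lL ul]; apply/hasP; exists l => //; exact: le_trans ul. Qed.

Lemma dominated_top m L T : ~~ dominated L m -> all (dominated (m :: L)) T ->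
  forall t, t \in T -> ~~ (m < t)%O.
Proof.
move=> nmL /allP TmL t /TmL; rewrite dominated_cons => /orP [tm | tL].
  by rewrite le_gtF.
by apply: contra nmL => mt; exact: dominated_le (ltW mt) tL.
Qed.

Lemma dominated_drop m L T : all (dominated (m :: L)) T -> m \notin T ->
  all (dominated ([seq t <- T | (t < m)%O] ++ L)) T.
Proof.
move=> /allP TmL mT; apply/allP => t tT; rewrite dominated_cat.
move: (TmL t tT); rewrite dominated_cons => /orP [tm | ->]; last by rewrite orbT.
apply/orP; left; apply: dominated_mem; rewrite mem_filter tT andbT lt_neqAle tm andbT.
by apply: contraNneq mT => <-.
Qed.

End Domination.

Section FormalSums.
Variables (R : comPzRingType) (d : Order.disp_t) (P : porderType d).
Variable F : PFunctor R P.

Local Notation src r := (tag r).1.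
Local Notation tgt r := (tag r).2.

Definition piece_at (l : P) (v : F l) : piece F := existT (fun j => F j) l v.

Definition relgen := {kj : P * P & F kj.1}.

Definition src_piece (r : relgen) : piece F := piece_at (tagged r).

Definition rel_to (m : P) (p : piece F) : relgen :=
  existT (fun kj : P * P => F kj.1) (tag p, m) (tagged p).

Definition rel_opp (r : relgen) : relgen :=
  existT (fun kj : P * P => F kj.1) (tag r) (- tagged r).

Definition coef_eq (s t : seq (piece F)) := forall l, coef l s = coef l t.

Definition rel_spanned (i : P) (s : seq (piece F)) :=
  exists rs : seq relgen,
    all (fun r : relgen => (src r < tgt r)%O && (tgt r < i)%O) rs /\
    coef_eq s (rel_sum rs).

Implicit Types (s t zs : seq (piece F)) (rs : seq relgen) (i j l m : P).

Lemma inj_at_tag (p : piece F) : inj_at (tag p) p = tagged p.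
Proof. by rewrite /inj_at; case: eqP => // e; rewrite (eq_axiomK e). Qed.

Lemma inj_at_piece_at l (v : F l) : inj_at l (piece_at v) = v.
Proof. exact: (inj_at_tag (piece_at v)). Qed.

Lemma inj_at_neq l (p : piece F) : tag p != l -> inj_at l p = 0.
Proof. by rewrite /inj_at; case: eqP. Qed.

Lemma inj_atN l k (v : F k) : inj_at l (piece_at (- v)) = - inj_at l (piece_at v).
Proof.
have [<-|kl] := eqVneq k l; first by rewrite !inj_at_piece_at.
by rewrite !inj_at_neq ?oppr0.
Qed.

Lemma inj_at0 l k : inj_at l (piece_at (0 : F k)) = 0.
Proof.
have [<-|kl] := eqVneq k l; first by rewrite inj_at_piece_at.
by rewrite inj_at_neq.
Qed.

Lemma coef_cat l s t : coef l (s ++ t) = coef l s + coef l t.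
Proof. exact: big_cat. Qed.

Lemma coef_seq1 l (p : piece F) : coef l [:: p] = inj_at l p.
Proof. exact: big_seq1. Qed.

Lemma coef_notin l s : l \notin map tag s -> coef l s = 0.
Proof.
move=> ls; rewrite /coef big1_seq // => p /andP [_ ps]; apply: inj_at_neq.
by apply: contraNneq ls => <-; exact: map_f.
Qed.

Lemma lt_notin_tags m s : all (fun p : piece F => (tag p < m)%O) s -> m \notin map tag s.
Proof. by move=> sm; apply/mapP => -[p /(allP sm) pm mp]; move: pm; rewrite -mp ltxx. Qed.

Lemma to_vertex_cat i s t : to_vertex i (s ++ t) = to_vertex i s + to_vertex i t.
Proof. exact: big_cat. Qed.

Lemma to_vertex_coef i s (J : seq P) : uniq J -> {subset map tag s <= J} ->
  to_vertex i s = \sum_(j <- J) mor F j i (coef j s).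
Proof.
move=> uJ sJ; under eq_bigr => j _ do rewrite raddf_sum.
rewrite exchange_big /=; apply: eq_big_seq => p ps.
rewrite (bigD1_seq (tag p)) ?sJ ?map_f //= inj_at_tag big1 ?addr0 // => j jp.
by rewrite inj_at_neq ?linear0 // eq_sym.
Qed.

Lemma to_vertex_coef_eq i s t : coef_eq s t -> to_vertex i s = to_vertex i t.
Proof.
move=> st; pose J := undup (map tag s ++ map tag t).
have sJ u : {subset map tag u <= J} -> to_vertex i u = \sum_(j <- J) mor F j i (coef j u).
  by apply: to_vertex_coef; exact: undup_uniq.
rewrite !sJ; first by apply: eq_bigr => j _; rewrite st.
all: by move=> l lu; rewrite mem_undup mem_cat lu ?orbT.
Qed.

Lemma coef_eq_isolate m s :
  coef_eq s ([seq p <- s | tag p != m] ++ [:: piece_at (coef m s)]).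
Proof.
move=> l; rewrite coef_cat coef_seq1 {1}/coef (bigID (fun p => tag p != m)) /=.
rewrite -big_filter; congr (_ + _); have [<-|ml] := eqVneq m l; last first.
  by rewrite inj_at_neq // big1 // => p /negPn/eqP pm; rewrite inj_at_neq ?pm.
rewrite inj_at_piece_at; symmetry; rewrite /coef (bigID (fun p => tag p != m)) /=.
by rewrite big1 ?add0r // => p; exact: inj_at_neq.
Qed.

Lemma coef_rel_sum l rs : coef l (rel_sum rs) = \sum_(r <- rs) coef l (rel_pieces r).
Proof. by rewrite /coef /rel_sum big_flatten big_map. Qed.

Lemma coef_rel_pieces l (r : relgen) : coef l (rel_pieces r) =
  inj_at l (src_piece r) + inj_at l (piece_at (- mor F (src r) (tgt r) (tagged r))).
Proof. by rewrite /coef big_cons big_seq1. Qed.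

Lemma coef_rel_sum_cat l rs rs' :
  coef l (rel_sum (rs ++ rs')) = coef l (rel_sum rs) + coef l (rel_sum rs').
Proof. by rewrite !coef_rel_sum big_cat. Qed.

Lemma coef_rel_sum_filter l rs (a : pred relgen) :
  coef l (rel_sum rs) = coef l (rel_sum (filter a rs)) + coef l (rel_sum (filter (predC a) rs)).
Proof. by rewrite !coef_rel_sum !big_filter (bigID a). Qed.

Lemma coef_rel_sum_opp l rs : coef l (rel_sum (map rel_opp rs)) = - coef l (rel_sum rs).
Proof.
rewrite !coef_rel_sum big_map -sumrN; apply: eq_bigr => r _.
by rewrite !coef_rel_pieces /= linearN !inj_atN opprD.
Qed.

Lemma rel_sum_rel_to m zs :
  coef_eq (rel_sum (map (rel_to m) zs)) (zs ++ [:: piece_at (- to_vertex m zs)]).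
Proof.
move=> l; rewrite coef_rel_sum big_map coef_cat coef_seq1.
under eq_bigr => p _ do rewrite coef_rel_pieces.
rewrite big_split /=; congr (_ + _).
have [<-|ml] := eqVneq m l; last by rewrite big1 => [|p _]; rewrite inj_at_neq.
rewrite inj_at_piece_at /to_vertex -sumrN.
by apply: eq_bigr => p _; rewrite inj_at_piece_at.
Qed.

Lemma rel_to_src_piece m rs : all (fun r : relgen => tgt r == m) rs ->
  map (rel_to m) (map src_piece rs) = rs.
Proof. by elim: rs => //= -[[k t] v] rs IH /andP [/= /eqP -> /IH ->]. Qed.

Lemma to_vertex_rel_spanned i s : rel_spanned i s -> to_vertex i s = 0.
Proof.
case=> rs [/allP rsi /(to_vertex_coef_eq i) ->].
rewrite /to_vertex /rel_sum big_flatten big_map big_seq big1 // => r /rsi /andP [kt ti].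
rewrite big_cons big_seq1 /= linearN.
by rewrite (mor_comp (ltW kt) (ltW ti)) subrr.
Qed.

Lemma rel_spanned_rel_sum i rs :
  all (fun r : relgen => (src r < tgt r)%O && (tgt r < i)%O) rs -> rel_spanned i (rel_sum rs).
Proof. by exists rs. Qed.

Lemma rel_spanned_sub i s t u :
  coef_eq (s ++ t) u -> rel_spanned i t -> rel_spanned i u -> rel_spanned i s.
Proof.
move=> stu [rt [rti trt]] [ru [rui uru]].
exists (ru ++ map rel_opp rt); split; first by rewrite all_cat rui all_map.
move=> l; rewrite coef_rel_sum_cat coef_rel_sum_opp -uru -trt -stu coef_cat.
by rewrite addrK.
Qed.

Lemma in_ImF0 j : in_ImF (0 : F j).
Proof. by exists [::]; rewrite /to_vertex big_nil. Qed.

Lemma in_ImFD j (x y : F j) : in_ImF x -> in_ImF y -> in_ImF (x + y).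
Proof.
case=> [s [sj ->]] [t [tj ->]]; exists (s ++ t).
by rewrite all_cat sj tj to_vertex_cat.
Qed.

Lemma in_ImFN j (x : F j) : in_ImF x -> in_ImF (- x).
Proof.
case=> [s [sj ->]]; exists [seq piece_at (- tagged p) | p : piece F <- s]; split.
  by rewrite all_map.
by rewrite /to_vertex big_map -sumrN; apply: eq_bigr => p _; rewrite linearN.
Qed.

Lemma in_ImF_mor j k (y : F k) : (k < j)%O -> in_ImF (mor F k j y).
Proof. by move=> kj; exists [:: piece_at y]; rewrite /= kj /to_vertex big_seq1. Qed.

Lemma in_ImF_coef_vertex i s : all (fun p : piece F => (tag p <= i)%O) s ->
  to_vertex i s = 0 -> in_ImF (coef i s).
Proof.
move=> si s0; have := to_vertex_coef_eq i (coef_eq_isolate i s).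
rewrite s0 to_vertex_cat /to_vertex big_seq1 /= mor_id => /esym/eqP.
rewrite addrC addr_eq0 => /eqP ->; apply: in_ImFN; eexists; split; last by [].
by apply/allP => p; rewrite mem_filter lt_neqAle => /andP [-> /(allP si)].
Qed.

Definition pseudo_projective_seq i := forall s,
  all (fun p : piece F => (tag p <= i)%O) s -> to_vertex i s = 0 ->
  forall m, (forall p, p \in s -> ~~ (m < tag p)%O) -> in_ImF (coef m s).

Lemma pseudo_projective_atE i : pseudo_projective_at F i <-> pseudo_projective_seq i.
Proof.
split=> [pp s si s0 m mmax | pps J uJ Ji x x0 j jJ jmax].
  have [ms | ?] := boolP (m \in map tag s); last by rewrite coef_notin //; exact: in_ImF0.
  apply: (pp (undup (map tag s)) (undup_uniq _) _ (fun l => coef l s) _ m).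
  - by apply/allP => l; rewrite mem_undup => /mapP [p ps ->]; exact: (allP si).
  - by rewrite -to_vertex_coef ?undup_uniq // => l; rewrite mem_undup.
  - by rewrite mem_undup.
  - by move=> l; rewrite mem_undup => /mapP [p ps ->]; exact: mmax.
pose s := [seq piece_at (x l) | l <- J].
have <- : coef j s = x j.
  rewrite /coef big_map (bigD1_seq j) //= inj_at_piece_at big1 ?addr0 // => l lj.
  by rewrite inj_at_neq.
apply: pps; last by move=> _ /mapP [l lJ ->]; exact: jmax.
  by rewrite all_map.
by rewrite /to_vertex big_map.
Qed.

Definition targets (rs : seq relgen) : seq P := map (fun r : relgen => tgt r) rs.

Lemma in_ImF_coef_rel_sum_dominated (B : seq P) j rs :
  (forall b, b \in B -> ~~ (j < b)%O) ->
  all (fun r : relgen => (src r < tgt r)%O) rs -> all (dominated B) (targets rs) ->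
  in_ImF (coef j (rel_sum rs)).
Proof.
rewrite /targets all_map => jmax /allP rs_asc /allP rsB.
rewrite coef_rel_sum big_seq; apply: big_ind; [exact: in_ImF0 | exact: in_ImFD |].
move=> [[k t] y] rrs; have /= kt := rs_asc _ rrs; have /hasP [b bB tb] := rsB _ rrs.
rewrite coef_rel_pieces inj_at_neq ?add0r /=; last first.
  by apply: contraNneq (jmax b bB) => <-; exact: lt_le_trans kt tb.
have [<-|tj] := eqVneq t j; last by rewrite inj_at_neq //; exact: in_ImF0.
by rewrite inj_at_piece_at -linearN; exact: in_ImF_mor.
Qed.

Lemma rel_spanned_lower_target m rs : colim_map_mono F m ->
  all (fun r : relgen => (src r < tgt r)%O && (src r != m)) rs ->
  coef m (rel_sum rs) = 0 ->
  exists2 rs' : seq relgen,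
    all (fun r : relgen => (src r < tgt r)%O && (tgt r < m)%O) rs' &
    coef_eq (rel_sum rs) (rel_sum ([seq r <- rs | tgt r != m] ++ rs')).
Proof.
move=> mono rs_src rs0; pose a (r : relgen) := tgt r != m.
pose w := map src_piece (filter (predC a) rs).
have to_m : all (fun r : relgen => tgt r == m) (filter (predC a) rs).
  by apply/allP => r; rewrite mem_filter => /andP [/negPn].
have wm : all (fun p : piece F => (tag p < m)%O) w.
  rewrite all_map; apply/allP => r rm; rewrite /= -(eqP (allP to_m r rm)).
  by move: rm; rewrite mem_filter => /andP [_ /(allP rs_src) /andP []].
have e_rs l : coef l (rel_sum rs) =
    coef l (rel_sum (filter a rs)) + coef l (w ++ [:: piece_at (- to_vertex m w)]).
  by rewrite (coef_rel_sum_filter l rs a) -rel_sum_rel_to rel_to_src_piece.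
have a_m0 : coef m (rel_sum (filter a rs)) = 0.
  rewrite coef_rel_sum big_seq big1 // => r; rewrite mem_filter => /andP [tm].
  by case/(allP rs_src)/andP => _ sm; rewrite coef_rel_pieces !inj_at_neq ?addr0.
have w0 : to_vertex m w = 0.
  apply/eqP; rewrite -oppr_eq0; apply/eqP; move: (e_rs m).
  by rewrite rs0 a_m0 coef_cat coef_notin ?lt_notin_tags // coef_seq1 inj_at_piece_at !add0r.
have [rs' [rs'm w_rs']] := mono w wm w0.
exists rs' => // l; rewrite e_rs w0 oppr0 coef_rel_sum_cat !coef_cat coef_seq1 inj_at0.
by rewrite addr0 w_rs'.
Qed.

Lemma coef_eq_lower_top m s zs : coef m s = to_vertex m zs ->
  coef_eq (s ++ rel_sum (map (rel_to m) zs)) ([seq p <- s | tag p != m] ++ zs).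
Proof.
move=> ezs l; rewrite coef_cat rel_sum_rel_to (coef_eq_isolate m s) ezs.
rewrite !coef_cat !coef_seq1 inj_atN -addrA; congr (_ + _).
by rewrite addrCA subrr addr0.
Qed.

Lemma rel_spanned_rel_to i m zs : (m < i)%O ->
  all (fun p : piece F => (tag p < m)%O) zs -> rel_spanned i (rel_sum (map (rel_to m) zs)).
Proof.
move=> mi zm; apply: rel_spanned_rel_sum; rewrite all_map; apply/allP => p /(allP zm) /= pm.
by rewrite pm mi.
Qed.

Section DCC.
Hypothesis dcc : DCC P.

Lemma colim_map_mono_of_pseudo_projective i :
  pseudo_projective_seq i -> colim_map_mono F i.
Proof.
move=> pp.
suff: forall L, all (fun l => (l < i)%O) L -> forall s,
    all (fun p : piece F => (tag p < i)%O) s -> to_vertex i s = 0 ->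
    all (dominated L) (map tag s) -> rel_spanned i s.
  move=> H s si s0; apply: (H (map tag s)); rewrite ?all_map //.
  by apply/allP => p ps; apply: dominated_mem; exact: map_f.
elim/(dcc_seq_ind dcc) => [|m L IH] Li s si s0 sL.
  by case: s {si s0} sL => // _; exists [::].
have /andP [mi Li'] : (m < i)%O && all (fun l => (l < i)%O) L := Li.
have [mL | nmL] := boolP (dominated L m).
  apply: (IH [::]) => //; apply/allP => l /(allP sL).
  by rewrite dominated_cons => /orP [/dominated_le | //]; apply.
have ssi : all (fun p : piece F => (tag p <= i)%O) s.
  by apply/allP => p /(allP si) /ltW.
have [zs [zm ezs]] := pp s ssi s0 m (fun p ps => dominated_top nmL sL (map_f tag ps)).
have es := coef_eq_lower_top ezs; have zs_spanned := rel_spanned_rel_to mi zm.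
apply: (rel_spanned_sub es zs_spanned); set s' := _ ++ zs.
have s'P p : p \in s' -> [&& (tag p < i)%O, dominated (m :: L) (tag p) & tag p != m].
  rewrite mem_cat mem_filter => /orP [/andP [pm ps] | /(allP zm) pm].
    by rewrite (allP si) // (allP sL _ (map_f tag ps)) pm.
  by rewrite (lt_trans pm mi) (dominated_le (ltW pm) (dominated_mem (mem_head _ _))) lt_eqF.
apply: (IH [seq t <- map tag s' | (t < m)%O] (filter_all _ _)).
- rewrite all_cat Li' andbT; apply/allP => t; rewrite mem_filter => /andP [tm _].
  exact: lt_trans tm mi.
- by apply/allP => p /s'P /and3P [].
- by rewrite -(to_vertex_coef_eq i es) to_vertex_cat s0 to_vertex_rel_spanned ?addr0.
- apply: dominated_drop; first by rewrite all_map; apply/allP => p /s'P /and3P [].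
  by apply/mapP => -[p /s'P /and3P [_ _ /eqP pm] mp]; apply: pm.
Qed.

Lemma in_ImF_coef_rel_sum (mono : forall k, colim_map_mono F k) (B : seq P) j rs :
  (forall b, b \in B -> ~~ (j < b)%O) ->
  all (fun r : relgen => (src r < tgt r)%O) rs ->
  (forall l, l \notin B -> coef l (rel_sum rs) = 0) ->
  in_ImF (coef j (rel_sum rs)).
Proof.
move=> jmax.
suff: forall L rs, all (fun r : relgen => (src r < tgt r)%O) rs ->
    all (dominated (L ++ B)) (targets rs) ->
    (forall l, l \notin B -> coef l (rel_sum rs) = 0) -> in_ImF (coef j (rel_sum rs)).
  move=> H rs_asc; apply: (H (targets rs)) => //; apply/allP => t trs.
  by rewrite dominated_cat dominated_mem.
elim/(dcc_seq_ind dcc) => [|m L IH] {}rs rs_asc rsLB rs0.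
  exact: in_ImF_coef_rel_sum_dominated rs_asc rsLB.
have [mLB | nmLB] := boolP (dominated (L ++ B) m).
  apply: (IH [::]) => //; apply/allP => t /(allP rsLB).
  by rewrite dominated_cons => /orP [/dominated_le | //]; apply.
have mB : m \notin B.
  by apply: contra nmLB => mB; rewrite dominated_cat (dominated_mem mB) orbT.
have rs_src : all (fun r : relgen => (src r < tgt r)%O && (src r != m)) rs.
  apply/allP => r rrs; rewrite (allP rs_asc) //=; apply: contraTneq (allP rs_asc r rrs) => ->.
  by apply: (dominated_top nmLB rsLB); exact: map_f.
have [rs' rs'm ers] := rel_spanned_lower_target (mono m) rs_src (rs0 m mB).
rewrite ers; set rs2 := _ ++ rs'.
have rs2P r : r \in rs2 ->
    [&& (src r < tgt r)%O, dominated (m :: L ++ B) (tgt r) & tgt r != m].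
  rewrite mem_cat mem_filter => /orP [/andP [tm rrs] | /(allP rs'm) /andP [st tm]].
    by rewrite (allP rs_asc) // (allP rsLB _ (map_f _ rrs)) tm.
  by rewrite st (dominated_le (ltW tm) (dominated_mem (mem_head _ _))) lt_eqF.
apply: (IH [seq t <- targets rs2 | (t < m)%O] (filter_all _ _)).
- by apply/allP => r /rs2P /and3P [].
- rewrite -catA; apply: dominated_drop.
    by rewrite /targets all_map; apply/allP => r /rs2P /and3P [].
  by apply/mapP => -[r /rs2P /and3P [_ _ /eqP tm] mt]; apply: tm.
- by move=> l lB; rewrite -ers rs0.
Qed.

Lemma pseudo_projective_of_colim_map_mono (mono : forall k, colim_map_mono F k) i :
  pseudo_projective_seq i.
Proof.
move=> s si s0 m mmax.
have [ms | ?] := boolP (m \in map tag s); last by rewrite coef_notin //; exact: in_ImF0.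
have mi : (m <= i)%O by case/mapP: ms => p ps ->; exact: (allP si).
have [-> | m_ne_i] := eqVneq m i; first exact: in_ImF_coef_vertex.
have s_lt_i : all (fun p : piece F => (tag p < i)%O) s.
  apply/allP => p ps; rewrite lt_neqAle (allP si p ps) andbT.
  by apply: contraNneq (mmax p ps) => ->; rewrite lt_neqAle m_ne_i.
have [rs [rsi srs]] := mono i s s_lt_i s0.
rewrite srs; apply: (in_ImF_coef_rel_sum mono (B := map tag s)).
- by move=> _ /mapP [p ps ->]; exact: mmax.
- by apply/allP => r /(allP rsi) /andP [].
- by move=> l ls; rewrite -srs coef_notin.
Qed.

End DCC.

End FormalSums.

Theorem theoremA (R : comPzRingType) (d : Order.disp_t) (P : porderType d)
  (F : PFunctor R P) :
  DCC P ->
  ((forall i : P, colim_map_mono F i) <-> pseudo_projective F).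
Proof.
move=> dcc; split=> [mono i | pp i].
  exact/pseudo_projective_atE/pseudo_projective_of_colim_map_mono.
exact/colim_map_mono_of_pseudo_projective/pseudo_projective_atE.
Qed.
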